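(* For any $x>0$ with $x\neq 1$, \[ \sqrt{x}+\frac{4}{\ln^{2}x}\left(\frac{1}{8}(x-1)\ln x+\sqrt{x}-\frac{x+1}{2}\right)\le\frac{1+x}{2}. \] *)

From Stdlib Require Export Reals.

(* Write x = e^(4w), so that sqrt x = e^(2w) and ln x = 4w.  The right-hand side minus the
   left-hand side then equals e^(2w) sinh w ((1 + 4w^2) sinh w - w cosh w) / (2w^2), which is
   nonnegative because w cosh w <= (1 + w^2/2) sinh w for w >= 0: the difference vanishes at 0
   and has derivative (w^2/2) cosh w >= 0.  Both factors involving sinh are odd in w. *)

From Coquelicot Require Import Coquelicot.
From Stdlib Require Import Reals Lra.
Open Scope R_scope.

Lemma derive_nonneg_le (f df : R -> R) (a b : R) :
  (forall x, a <= x <= b -> is_derive f x (df x)) ->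
  (forall x, a <= x <= b -> 0 <= df x) ->
  a <= b -> f a <= f b.
Proof.
  intros Hd Hpos Hab.
  destruct (MVT_gen f a b df) as [c [Hc Hmvt]].
  - intros x Hx; rewrite Rmin_left, Rmax_right in Hx by lra; apply Hd; lra.
  - intros x Hx; rewrite Rmin_left, Rmax_right in Hx by lra.
    apply continuity_pt_filterlim, (ex_derive_continuous (V := R_NormedModule)).
    exists (df x); apply Hd; lra.
  - rewrite Rmin_left, Rmax_right in Hc by lra.
    assert (0 <= df c * (b - a)) by (apply Rmult_le_pos; [apply Hpos | ]; lra).
    lra.
Qed.

Lemma cosh_gt0 (w : R) : 0 < cosh w.
Proof.
  unfold cosh; pose proof (exp_pos w); pose proof (exp_pos (- w)); lra.
Qed.

Lemma sinh_ge0 (w : R) : 0 <= w -> 0 <= sinh w.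
Proof.
  intros [Hw | <-].
  - rewrite <- sinh_0; left; apply sinh_lt, Hw.
  - rewrite sinh_0; lra.
Qed.

Lemma mul_cosh_le (w : R) : 0 <= w -> w * cosh w <= (1 + w ^ 2 / 2) * sinh w.
Proof.
  intros Hw.
  set (g v := (1 + v ^ 2 / 2) * sinh v - v * cosh v).
  assert (Hg : g 0 <= g w).
  { apply (derive_nonneg_le g (fun v => v ^ 2 / 2 * cosh v)); [ | | exact Hw].
    - intros v _; unfold g, sinh, cosh; auto_derive; [exact I | field].
    - intros v _; pose proof (cosh_gt0 v); pose proof (pow2_ge_0 v).
      apply Rmult_le_pos; lra. }
  unfold g in Hg; rewrite sinh_0, cosh_0 in Hg; lra.
Qed.

Lemma sinh_mul_sinh_cosh_ge0 (w : R) :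
  0 <= sinh w * ((1 + w ^ 2 / 2) * sinh w - w * cosh w).
Proof.
  destruct (Rle_lt_dec 0 w) as [Hw | Hw].
  - apply Rmult_le_pos; [apply sinh_ge0, Hw | pose proof (mul_cosh_le w Hw); lra].
  - replace (sinh w * ((1 + w ^ 2 / 2) * sinh w - w * cosh w))
      with (sinh (- w) * ((1 + (- w) ^ 2 / 2) * sinh (- w) - (- w) * cosh (- w)))
      by (unfold sinh, cosh; rewrite Ropp_involutive; field).
    apply Rmult_le_pos; [apply sinh_ge0; lra | pose proof (mul_cosh_le (- w)); lra].
Qed.

Lemma corollary2p4_exp (w : R) : w <> 0 ->
  exp w ^ 2 + 4 / (4 * w) ^ 2
    * (1 / 8 * (exp w ^ 4 - 1) * (4 * w) + exp w ^ 2 - (exp w ^ 4 + 1) / 2)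
  <= (1 + exp w ^ 4) / 2.
Proof.
  intros Hw.
  pose proof (exp_pos w) as Ht.
  assert (Hdiff : (1 + exp w ^ 4) / 2 - (exp w ^ 2 + 4 / (4 * w) ^ 2
      * (1 / 8 * (exp w ^ 4 - 1) * (4 * w) + exp w ^ 2 - (exp w ^ 4 + 1) / 2))
    = exp w ^ 2 / (2 * w ^ 2) * (sinh w * ((1 + 4 * w ^ 2) * sinh w - w * cosh w))).
  { unfold sinh, cosh; rewrite exp_Ropp; field; lra. }
  assert (Hkey : 0 <= sinh w * ((1 + 4 * w ^ 2) * sinh w - w * cosh w)).
  { pose proof (sinh_mul_sinh_cosh_ge0 w).
    assert (0 <= w ^ 2 * (sinh w * sinh w)) by (apply Rmult_le_pos; nra).
    nra. }
  assert (Hcoef : 0 <= exp w ^ 2 / (2 * w ^ 2)).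
  { pose proof (pow2_gt_0 w Hw); apply Rdiv_le_0_compat; nra. }
  pose proof (Rmult_le_pos _ _ Hcoef Hkey); lra.
Qed.

Theorem corollary2p4 (x : R) (hx : 0 < x) (hx1 : x <> 1) :
  sqrt x + 4 / (ln x ^ 2) * (1 / 8 * (x - 1) * ln x + sqrt x - (x + 1) / 2)
  <= (1 + x) / 2.
Proof.
  set (w := ln x / 4).
  assert (Hln : ln x = 4 * w) by (unfold w; field).
  assert (Hx : x = exp w ^ 4).
  { rewrite <- (exp_ln x hx) at 1; rewrite Hln.
    replace (4 * w) with (w + w + w + w) by ring; rewrite !exp_plus; ring. }
  assert (Hsqrt : sqrt x = exp w ^ 2).
  { rewrite Hx; replace (exp w ^ 4) with ((exp w ^ 2) ^ 2) by ring.
    apply sqrt_pow2; pose proof (exp_pos w); nra. }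
  assert (Hw : w <> 0).
  { intros Hw0; apply hx1; rewrite Hx, Hw0, exp_0; ring. }
  rewrite Hsqrt, Hln, Hx.
  apply corollary2p4_exp, Hw.
Qed.
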